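(* Let $f_1,\dots,f_{n_f}:\mathbb{R}^{n_x}\times\mathbb{R}^{n_u}\to\mathbb{R}^{n_x}$ and $g_1,\dots,g_{n_f}:\mathbb{R}^{n_x}\to\mathbb{R}$ be smooth, let $F(x,u)=[f_1(x,u),\dots,f_{n_f}(x,u)]$ and $g(x)=(g_1(x),\dots,g_{n_f}(x))$. Let $x:[0,T]\to\mathbb{R}^{n_x}$ be a continuous function and $\theta,\lambda:[0,T]\to\mathbb{R}^{n_f}$, $\mu:[0,T]\to\mathbb{R}$ functions such that $x,\theta,\lambda,\mu$ form a solution of the dynamic complementarity system $$\dot x=F(x,u)\theta,\quad 0=g(x)-\lambda-\mu e,\quad 1=e^\top\theta,\quad 0\le\theta\perp\lambda\ge 0,$$ where the algebraic conditions hold for every $t\in[0,T]$. Then the functions $\lambda(t)$ and $\mu(t)$ are continuous in time.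
   Context: $e$ denotes the vector of all ones; $0\le a\perp b\ge 0$ means $a\ge 0$, $b\ge 0$ componentwise and $a^\top b=0$. *)

From HB Require Import structures.
From mathcomp Require Import all_boot all_order all_algebra.
From mathcomp Require Import all_classical all_reals all_analysis.
Set Implicit Arguments. Unset Strict Implicit. Unset Printing Implicit Defensive.
Import Order.TTheory GRing.Theory Num.Theory.
Import numFieldNormedType.Exports.
Local Open Scope classical_set_scope.
Local Open Scope ring_scope.

Fixpoint iter_dir {R : realType} {V W : normedModType R}
    (f : V -> W) (vs : seq V) : V -> W :=
  match vs with
  | [::] => f
  | v :: vs' => fun x => 'D_v (iter_dir f vs') x
  end.

Definition smooth {R : realType} {V W : normedModType R} (f : V -> W) : Prop :=
  forall (vs : seq V) (x : V), differentiable (iter_dir f vs) x.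

(* F(x,u) = [f_1(x,u), ..., f_nf(x,u)] as an nx-by-nf matrix
   (vectors of R^n are row vectors 'rV_n; column i of F is f_i). *)
Definition Fmat {R : realType} (nx nu nf : nat)
    (f : 'I_nf -> 'rV[R]_nx * 'rV[R]_nu -> 'rV[R]_nx)
    (x : 'rV[R]_nx) (u : 'rV[R]_nu) : 'M[R]_(nx, nf) :=
  \matrix_(j < nx, i < nf) f i (x, u) 0 j.

Definition gvec {R : realType} (nx nf : nat) (g : 'I_nf -> 'rV[R]_nx -> R)
    (x : 'rV[R]_nx) : 'rV[R]_nf := \row_(i < nf) g i x.

Definition ones {R : realType} (n : nat) : 'rV[R]_n := const_mx 1.

Definition compl {R : realType} (n : nat) (a b : 'rV[R]_n) : Prop :=
  (forall i, 0 <= a 0 i) /\ (forall i, 0 <= b 0 i) /\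
  \sum_(i < n) a 0 i * b 0 i = 0.

(* xdot = F(x,u) theta on [0,T] in the Caratheodory (integral) sense:
   for every t in [0,T] and every component j, s |-> (F(x s,u s) theta s)_j
   is Lebesgue integrable on [0,t] and
   x_j(t) = x_j(0) + int_0^t (F(x(s),u(s)) theta(s))_j ds. *)
Definition ode_solution {R : realType} (nx nu nf : nat)
    (f : 'I_nf -> 'rV[R]_nx * 'rV[R]_nu -> 'rV[R]_nx) (T : R)
    (x : R -> 'rV[R]_nx) (u : R -> 'rV[R]_nu) (theta : R -> 'rV[R]_nf) : Prop :=
  forall t, t \in `[0, T] -> forall j : 'I_nx,
    let h := fun s => (Fmat f (x s) (u s) *m (theta s)^T) j 0 in
    (@lebesgue_measure R).-integrable `[0, t] (fun s => (h s)%:E) /\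
    x t 0 j = x 0 0 j + \int[@lebesgue_measure R]_(s in `[0, t]) h s.

Definition DCS_solution {R : realType} (nx nu nf : nat)
    (f : 'I_nf -> 'rV[R]_nx * 'rV[R]_nu -> 'rV[R]_nx)
    (g : 'I_nf -> 'rV[R]_nx -> R) (T : R)
    (u : R -> 'rV[R]_nu) (x : R -> 'rV[R]_nx)
    (theta lam : R -> 'rV[R]_nf) (mu : R -> R) : Prop :=
  ode_solution f T x u theta /\
  forall t, t \in `[0, T] ->
    [/\ gvec g (x t) - lam t - mu t *: ones nf = 0,
        \sum_(i < nf) theta t 0 i = 1 &
        compl (theta t) (lam t)].

From HB Require Import structures.
From mathcomp Require Import all_boot all_order all_algebra.
From mathcomp Require Import all_classical all_reals all_analysis.
Set Implicit Arguments. Unset Strict Implicit. Unset Printing Implicit Defensive.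
Import Order.TTheory GRing.Theory Num.Theory.
Import numFieldNormedType.Exports.
Local Open Scope classical_set_scope.
Local Open Scope ring_scope.

(* Since e^T theta = 1, some theta_j is positive, so complementarity forces
   lambda_j = 0; together with lambda >= 0 this makes mu(t) the minimum of the
   g_i(x(t)), and lambda = g(x) - mu e.  The minimum of the entries of a vector
   is 1-Lipschitz for the sup norm, so mu inherits the continuity of g o x,
   and then so does lambda. *)

Definition is_row_min (R : numDomainType) (n : nat) (m : R) (v : 'rV[R]_n) :=
  (forall i, m <= v 0 i) /\ exists j, m = v 0 j.

Lemma ler_mx_norm_entry (K : realDomainType) (m n : nat) (M : 'M[K]_(m, n)) i j :
  `|M i j| <= `|M|.
Proof.
rewrite [leRHS]/Num.norm /= mx_normrE.
by apply/bigmax_geP; right; exists (i, j).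
Qed.

Lemma row_min_lipschitz (R : realDomainType) (n : nat) (m m' : R)
    (v w : 'rV[R]_n) :
  is_row_min m v -> is_row_min m' w -> `|m - m'| <= `|v - w|.
Proof.
move=> [vm [j mj]] [wm [k mk]]; subst m m'.
have entry i : `|v 0 i - w 0 i| <= `|v - w|.
  by have := ler_mx_norm_entry (v - w) 0 i; rewrite !mxE.
rewrite ler_norml; apply/andP; split.
- rewrite lerNl opprB; apply: le_trans (entry j); rewrite distrC.
  by apply: le_trans (ler_norm _); rewrite lerD2r wm.
- apply: le_trans (entry k); apply: le_trans (ler_norm _).
  by rewrite lerD2r vm.
Qed.

Lemma compl_row_min (R : realType) (n : nat) (v th la : 'rV[R]_n) (m : R) :
  [/\ v - la - m *: ones n = 0, \sum_(i < n) th 0 i = 1 & compl th la] ->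
  la = v - m *: ones n /\ is_row_min m v.
Proof.
move=> [+ sum_th [th_ge0 [la_ge0 orth]]]; move/eqP; rewrite subr_eq0 => /eqP vla.
have la_def : la = v - m *: ones n by rewrite -vla opprB addrC subrK.
have la_entry i : la 0 i = v 0 i - m by rewrite la_def !mxE mulr1.
split=> //; split=> [i|].
  by rewrite -subr_ge0 -la_entry.
have [j th_j] : exists j, th 0 j != 0.
  apply/not_existsP => th0; move: sum_th; rewrite big1 => [/eqP|i _].
    by rewrite eq_sym oner_eq0.
  by apply/eqP/negPn/negP; exact: th0.
exists j; apply/eqP; rewrite eq_sym -subr_eq0 -la_entry.
have := psumr_eq0P (fun i _ => mulr_ge0 (th_ge0 i) (la_ge0 i)) orth (i := j) isT.
by move/eqP; rewrite mulf_eq0 (negbTE th_j).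
Qed.

Lemma continuous_row (R : realFieldType) (T : topologicalType) (n : nat)
    (h : 'I_n -> T -> R) :
  (forall i, continuous (h i)) -> continuous (fun x => \row_i h i x).
Proof.
move=> hc x; apply/cvgrPdist_lt => e e0.
have near_x : \forall y \near x, forall i, `|h i x - h i y| < e.
  by apply: filter_forall => i; exact: (cvgrPdist_lt _ _).1 (hc i x) e e0.
near=> y; have hy : forall i, `|h i x - h i y| < e by near: y.
rewrite [X in X < _]/Num.norm /= mx_normrE.
by apply: bigmax_lt => // -[i0 i] _ /=; rewrite (ord1 i0) !mxE.
Unshelve. all: by end_near.
Qed.

Lemma continuous_row_min_within (R : realFieldType) (T : topologicalType)
    (n : nat) (A : set T) (G : T -> 'rV[R]_n) (m : T -> R) :
  (forall t, A t -> is_row_min (m t) (G t)) ->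
  {within A, continuous G} -> {within A, continuous m}.
Proof.
move=> mG /subspace_continuousP Gc; apply/subspace_continuousP => t At.
apply/cvgrPdist_lt => e e0; near=> s.
have As : A s by near: s; exact: near_withinT.
rewrite /from_subspace.
apply: le_lt_trans (row_min_lipschitz (mG t At) (mG s As)) _.
by near: s; exact: (cvgrPdist_lt _ _).1 (Gc t At) e e0.
Unshelve. all: by end_near.
Qed.

Theorem lemma1 (R : realType) (nx nu nf : nat)
    (f : 'I_nf -> 'rV[R]_nx * 'rV[R]_nu -> 'rV[R]_nx)
    (g : 'I_nf -> 'rV[R]_nx -> R) (T : R)
    (u : R -> 'rV[R]_nu) (x : R -> 'rV[R]_nx)
    (theta lam : R -> 'rV[R]_nf) (mu : R -> R) :
  (forall i, smooth (f i)) ->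
  (forall i, smooth (g i)) ->
  {within `[0, T], continuous x} ->
  DCS_solution f g T u x theta lam mu ->
  {within `[0, T], continuous lam} /\ {within `[0, T], continuous mu}.
Proof.
move=> _ g_smooth xc [_ alg].
have gc : continuous (gvec g).
  apply: continuous_row => i y.
  exact/differentiable_continuous/(g_smooth i [::] y).
have Gc : {within `[0, T], continuous (gvec g \o x)}.
  by move=> s; apply: continuous_comp (xc s) (gc _).
have la_mu t : t \in `[0, T] ->
    lam t = gvec g (x t) - mu t *: ones nf /\ is_row_min (mu t) (gvec g (x t)).
  by move=> /alg /compl_row_min.
have muc : {within `[0, T], continuous mu}.
  by apply: continuous_row_min_within Gc => t /la_mu[].
split=> //.
apply: (subspace_eq_continuous (f := fun t => gvec g (x t) - mu t *: ones nf)).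
  by move=> t /set_mem /la_mu[+ _]; rewrite /from_subspace => ->.
move=> t; have tF : Filter (nbhs_subspace t) by exact: nbhs_subspace_filter.
apply: (cvgB (f := gvec g \o x) (g := fun t => mu t *: ones nf)) => //.
  exact: Gc.
by apply: cvgZ => //; [exact: muc | exact: cvg_cst].
Qed.
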